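(* Let $p>1$, let $\varphi:\mathbb{R}^n\to\mathbb{R}\cup\{+\infty\}$ be proper and lower semicontinuous, and let $\bar x\in\operatorname{dom}\varphi$. Then: (a) if $\bar x\in\operatorname{argmin}\varphi$, then $\bar x$ is a $p$-calm point of $\varphi$ with any constant $M>0$; (b) if $\operatorname{prox}^p_{\gamma\varphi}(\bar x)=\{\bar x\}$ (for some $\gamma>0$), then $\bar x$ is a $p$-calm point of $\varphi$ with constant $M=\frac{1}{p\gamma}$; (c) if $\bar x$ is a $p$-calm point of $\varphi$ with constant $M$, then for each $\gamma\in(0,\frac{1}{pM}]$, $\operatorname{prox}^p_{\gamma\varphi}(\bar x)=\{\bar x\}$; (d) if for some $\hat\gamma>0$, $\bar x\in\mathrm{Fix}(\operatorname{prox}^p_{\hat\gamma\varphi})$, then for each $\gamma\in(0,\hat\gamma)$, $\operatorname{prox}^p_{\gamma\varphi}(\bar x)=\{\bar x\}$, and hence $\bar x$ is a $p$-calm point of $\varphi$ with constant $M=\frac{1}{p\gamma}$; (e) if $\bar x$ is a $p$-calm point of $\varphi$, then $\varphi$ is high-order prox-bounded.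
   Context: $\operatorname{prox}^p_{\gamma\varphi}(x):=\operatorname{argmin}_{y}\big(\varphi(y)+\frac{1}{p\gamma}\|x-y\|^p\big)$; $\mathrm{Fix}(\operatorname{prox}^p_{\gamma\varphi})=\{x:x\in\operatorname{prox}^p_{\gamma\varphi}(x)\}$. A point $\bar x\in\operatorname{dom}\varphi$ is a $p$-calm point of $\varphi$ with constant $M>0$ if $\varphi(x)+M\|x-\bar x\|^p>\varphi(\bar x)$ for all $x\neq\bar x$. $\varphi$ is high-order prox-bounded (order $p$) if $\inf_y\big(\varphi(y)+\frac{1}{p\gamma}\|x-y\|^p\big)>-\infty$ for some $\gamma>0$ and $x\in\mathbb{R}^n$. *)

(* R^n is 'rV[R]_n (its canonical topology is the
   product topology = Euclidean topology); the norm ||.|| is the Euclidean norm. *)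
From HB Require Import structures.
From mathcomp Require Import all_boot all_order all_algebra.
From mathcomp Require Import all_classical all_reals all_analysis.
Set Implicit Arguments. Unset Strict Implicit. Unset Printing Implicit Defensive.
Import Order.TTheory GRing.Theory Num.Theory.
Import numFieldNormedType.Exports.
Local Open Scope classical_set_scope.
Local Open Scope ring_scope.

Section Defs.
Variables (R : realType) (n : nat).
Local Notation V := 'rV[R]_n.

Definition enorm (x : V) : R := Num.sqrt (\sum_(i < n) x ord0 i ^+ 2).

Definition proper_fun (phi : V -> \bar R) : Prop :=
  (forall x, phi x != -oo%E) /\ (exists x, (phi x < +oo)%E).

Definition dom (phi : V -> \bar R) : set V := [set x | (phi x < +oo)%E].

Definition argmin_fun (f : V -> \bar R) : set V :=
  [set y | forall z, (f y <= f z)%E].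

Definition prox_obj (p gamma : R) (phi : V -> \bar R) (x : V) (y : V) : \bar R :=
  (phi y + ((p * gamma)^-1 * powR (enorm (x - y)) p)%:E)%E.

Definition prox (p gamma : R) (phi : V -> \bar R) (x : V) : set V :=
  argmin_fun (prox_obj p gamma phi x).

Definition Fix_prox (p gamma : R) (phi : V -> \bar R) : set V :=
  [set x | prox p gamma phi x x].

Definition p_calm (p : R) (phi : V -> \bar R) (xbar : V) (M : R) : Prop :=
  [/\ xbar \in dom phi, 0 < M &
      forall x, x != xbar ->
        (phi xbar < phi x + (M * powR (enorm (x - xbar)) p)%:E)%E].

Definition hprox_bounded (p : R) (phi : V -> \bar R) : Prop :=
  exists gamma, exists x, 0 < gamma /\
    (-oo < ereal_inf [set prox_obj p gamma phi x y | y in [set: V]])%E.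

End Defs.

From HB Require Import structures.
From mathcomp Require Import all_boot all_order all_algebra.
From mathcomp Require Import all_classical all_reals all_analysis.
Set Implicit Arguments. Unset Strict Implicit. Unset Printing Implicit Defensive.
Import Order.TTheory GRing.Theory Num.Theory.
Import numFieldNormedType.Exports.
Local Open Scope classical_set_scope.
Local Open Scope ring_scope.

(* Everything rests on comparing phi xbar with the prox objective at xbar:
   since ||xbar - xbar||^p = 0, the objective equals phi xbar at y = xbar, so
   prox^p_{gamma phi}(xbar) = {xbar} says exactly that
   phi xbar < phi y + ||y - xbar||^p / (p gamma) for all y <> xbar, i.e. that xbar
   is p-calm with constant 1/(p gamma).  Calmness is monotone in the constant,
   which gives (c); a fixed point for ghat gives the non-strict inequality with
   1/(p ghat), which becomes strict for any larger constant, giving (a) (with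
   constant 0) and (d).  Finally a minimiser of the prox objective with finite
   value bounds it from below, giving (e). *)

Section EuclideanNorm.
Variables (R : realType) (n : nat).
Local Notation V := 'rV[R]_n.

Lemma enormN (v : V) : enorm (- v) = enorm v.
Proof. by rewrite /enorm; congr Num.sqrt; apply: eq_bigr => i _; rewrite mxE sqrrN. Qed.

Lemma enormB (x y : V) : enorm (x - y) = enorm (y - x).
Proof. by rewrite -opprB enormN. Qed.

Lemma enorm0 : enorm (0 : V) = 0.
Proof. by rewrite /enorm big1 ?sqrtr0 // => i _; rewrite mxE expr0n. Qed.

Lemma enorm_gt0 (v : V) : v != 0 -> 0 < enorm v.
Proof.
move=> v_neq0; rewrite /enorm sqrtr_gt0 lt0r sumr_ge0 ?andbT; last first.
  by move=> i _; rewrite sqr_ge0.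
apply: contra v_neq0 => /eqP sum_eq0; apply/eqP/rowP => j.
have /eqP := psumr_eq0P (fun i _ => sqr_ge0 (v ord0 i)) sum_eq0 (i := j) isT.
by rewrite sqrf_eq0 => /eqP ->; rewrite mxE.
Qed.

Lemma powR_enormB_gt0 (p : R) (x y : V) : x != y -> 0 < powR (enorm (x - y)) p.
Proof. by move=> xy; apply/powR_gt0/enorm_gt0; rewrite subr_eq0. Qed.

End EuclideanNorm.

Lemma le_invM_swap (R : realFieldType) (p M gamma : R) :
  0 < p -> 0 < M -> 0 < gamma -> gamma <= (p * M)^-1 -> M <= (p * gamma)^-1.
Proof.
move=> p_gt0 M_gt0 gamma_gt0 le_gamma.
rewrite -[M]invrK lef_pV2 ?posrE ?invr_gt0 ?mulr_gt0 //.
apply: (le_trans (ler_wpM2l (ltW p_gt0) le_gamma)).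
by rewrite invfM mulrA mulfV ?mul1r // lt0r_neq0.
Qed.

Section Calmness.
Variables (R : realType) (n : nat) (p : R) (phi : 'rV[R]_n -> \bar R).
Local Notation V := 'rV[R]_n.

Lemma prox_obj_self (gamma : R) (x : V) :
  p != 0 -> prox_obj p gamma phi x x = phi x.
Proof. by move=> p_neq0; rewrite /prox_obj subrr enorm0 powR0 // mulr0 adde0. Qed.

Lemma p_calm_le (x : V) (M M' : R) :
  M <= M' -> p_calm p phi x M -> p_calm p phi x M'.
Proof.
move=> MM' [x_dom M_gt0 calm]; split=> [//||y yx]; first exact: lt_le_trans MM'.
apply: (lt_le_trans (calm y yx)); apply: leeD2l; rewrite lee_fin.
by apply: ler_wpM2r; first exact: powR_ge0.
Qed.

Lemma p_calm_of_le (x : V) (a M : R) :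
  x \in dom phi -> (forall y, phi y != -oo%E) -> 0 <= a -> a < M ->
  (forall y, (phi x <= phi y + (a * powR (enorm (y - x)) p)%:E)%E) ->
  p_calm p phi x M.
Proof.
move=> x_dom phiN a_ge0 aM le_x; split=> // [|y yx]; first exact: le_lt_trans a_ge0 aM.
move: (le_x y) (phiN y); case: (phi y) => [r le_r _| _ _ |//].
- apply: (le_lt_trans le_r); rewrite -!EFinD lte_fin ltrD2l ltr_pM2r //.
  exact: powR_enormB_gt0.
- by rewrite addye //; move: x_dom; rewrite inE.
Qed.

Lemma Fix_prox_le (gamma : R) (x : V) :
  p != 0 -> x \in Fix_prox p gamma phi ->
  forall y, (phi x <= phi y + ((p * gamma)^-1 * powR (enorm (y - x)) p)%:E)%E.
Proof.
move=> p_neq0 /[1!inE] x_fix y.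
by have := x_fix y; rewrite (prox_obj_self gamma x p_neq0) /prox_obj enormB.
Qed.

Lemma p_calm_prox_set1 (gamma : R) (x : V) :
  0 < p -> 0 < gamma -> x \in dom phi ->
  p_calm p phi x (p * gamma)^-1 <-> prox p gamma phi x = [set x].
Proof.
move=> p_gt0 gamma_gt0 x_dom; have p_neq0 := lt0r_neq0 p_gt0.
have obj_x := prox_obj_self gamma x p_neq0.
split=> [[_ _ calm]|prox_x].
- have lt_obj y : y != x -> (phi x < prox_obj p gamma phi x y)%E.
    by move=> yx; rewrite /prox_obj enormB; exact: calm.
  apply/seteqP; split=> y /= => [y_min|->].
  + apply/eqP; apply: contraPT y_min => yx /(_ x).
    by rewrite obj_x leNgt lt_obj.
  + move=> z; rewrite obj_x; have [->|zx] := eqVneq z x; first by rewrite obj_x.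
    exact/ltW/lt_obj.
- split=> // [|y yx]; first by rewrite invr_gt0 mulr_gt0.
  have x_min : prox p gamma phi x x by rewrite prox_x.
  have y_nmin : ~ prox p gamma phi x y by rewrite prox_x => /= /eqP; apply/negP.
  have [z /negP] : exists z, ~ (prox_obj p gamma phi x y <= prox_obj p gamma phi x z)%E.
    by apply: contrapT => no_z; apply: y_nmin => z; apply: contrapT => ?; apply: no_z; exists z.
  rewrite -ltNge => lt_z; have := le_lt_trans (x_min z) lt_z.
  by rewrite obj_x /prox_obj enormB.
Qed.

Lemma hprox_bounded_of_prox (gamma : R) (x y : V) :
  0 < gamma -> prox p gamma phi x y -> (-oo < prox_obj p gamma phi x y)%E ->
  hprox_bounded p phi.
Proof.
move=> gamma_gt0 y_min obj_y; exists gamma, x; split=> //.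
by apply: (lt_le_trans obj_y); apply/ereal_infP => _ [z _ <-]; exact: y_min.
Qed.

End Calmness.

Theorem theorem3 (R : realType) (n : nat) (p : R) (phi : 'rV[R]_n -> \bar R)
    (xbar : 'rV[R]_n) :
  1 < p -> proper_fun phi -> lower_semicontinuous phi -> xbar \in dom phi ->
  [/\ (* (a) *)
      (xbar \in argmin_fun phi -> forall M : R, 0 < M -> p_calm p phi xbar M),
      (* (b) *)
      (forall gamma : R, 0 < gamma -> prox p gamma phi xbar = [set xbar] ->
         p_calm p phi xbar (p * gamma)^-1),
      (* (c) *)
      (forall M : R, p_calm p phi xbar M ->
         forall gamma : R, 0 < gamma -> gamma <= (p * M)^-1 ->
           prox p gamma phi xbar = [set xbar]),
      (* (d) *)
      (forall ghat : R, 0 < ghat -> xbar \in Fix_prox p ghat phi ->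
         forall gamma : R, 0 < gamma -> gamma < ghat ->
           prox p gamma phi xbar = [set xbar] /\
           p_calm p phi xbar (p * gamma)^-1) &
      (* (e) *)
      ((exists M : R, p_calm p phi xbar M) -> hprox_bounded p phi)].
Proof.
move=> p_gt1 [phiN _] _ x_dom; have p_gt0 := lt_trans ltr01 p_gt1.
have p_neq0 := lt0r_neq0 p_gt0.
have calm_prox gamma := @p_calm_prox_set1 R n p phi gamma xbar p_gt0.
split.
- move=> /[1!inE] x_min M M_gt0; apply: (p_calm_of_le (a := 0)) => // y.
  by rewrite mul0r adde0.
- by move=> gamma gamma_gt0 /(calm_prox gamma gamma_gt0 x_dom).
- move=> M calm_M gamma gamma_gt0 le_gamma; have M_gt0 : 0 < M by case: calm_M.
  by apply/calm_prox => //; apply: p_calm_le calm_M; apply: le_invM_swap.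
- move=> ghat ghat_gt0 x_fix gamma gamma_gt0 lt_gamma.
  have calm : p_calm p phi xbar (p * gamma)^-1.
    apply: (p_calm_of_le _ phiN _ _ (Fix_prox_le p_neq0 x_fix)) => //.
      by rewrite invr_ge0 mulr_ge0 ?ltW.
    by rewrite ltf_pV2 ?posrE ?mulr_gt0 // ltr_pM2l.
  by split=> //; apply/calm_prox.
- move=> [M calm_M]; have M_gt0 : 0 < M by case: calm_M.
  have gamma_gt0 : 0 < (p * M)^-1 by rewrite invr_gt0 mulr_gt0.
  have /calm_prox prox_x : p_calm p phi xbar (p * (p * M)^-1)^-1.
    by rewrite invfM invrK mulrA mulVf // mul1r.
  apply: (hprox_bounded_of_prox (x := xbar) (y := xbar) gamma_gt0).
    by rewrite prox_x.
  by rewrite (prox_obj_self phi (p * M)^-1 xbar p_neq0) ltNye.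
Qed.
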